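(* Let $\ell\ge 2$ and $k>\ell$ be integers. Then $\overline{\alpha}(\{1,\dots,\ell-1,k\})=\frac{1}{\ell}$ if $k\not\equiv 0\pmod{\ell}$, and $\overline{\alpha}(\{1,\dots,\ell-1,k\})=\frac{k}{\ell(k+1)}$ if $k\equiv 0\pmod{\ell}$.
   Context: For a finite set $S$ of positive integers, the distance graph $G(S)$ has vertex set $\mathbb{Z}$, with $i,j$ adjacent iff $|i-j|\in S$. The density of $A\subseteq\mathbb{Z}$ is $\delta(A)=\limsup_{N\to\infty}\frac{|A\cap[-N,N]|}{2N+1}$, and the independence ratio $\overline{\alpha}(S)$ is the supremum of $\delta(A)$ over independent sets $A$ of $G(S)$. *)

From Stdlib Require Import Reals ZArith List.
From Coquelicot Require Import Coquelicot.
Open Scope R_scope.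

Definition count_sym (A : Z -> bool) (N : nat) : nat :=
  List.length (List.filter (fun i : nat => A (Z.of_nat i - Z.of_nat N)%Z)
                           (List.seq 0 (2 * N + 1))).

Definition density (A : Z -> bool) : Rbar :=
  LimSup_seq (fun N => INR (count_sym A N) / INR (2 * N + 1)).

Definition independent (S : nat -> Prop) (A : Z -> bool) : Prop :=
  forall i j : Z, A i = true -> A j = true -> ~ S (Z.abs_nat (i - j)).

Definition indep_ratio (S : nat -> Prop) : Rbar :=
  Rbar_lub (fun y => exists A, independent S A /\ density A = y).

(* An independent set meets every window of l consecutive integers at most
   once, since the distances 1, ..., l-1 are forbidden; this gives density at
   most 1/l.  When k = m l, a window of k + 1 integers cannot contain both of
   its endpoints, so it has at most m elements, giving density at most
   m/(k+1) = k/(l(k+1)).  Both bounds are attained by periodic sets: with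
   period p, take the residues 0, l, 2l, ... that are at most p - l.  For p = l
   these are the multiples of l, which avoid the distance k when l does not
   divide k; for p = k + 1 = m l + 1 the distance k acts as a shift by -1
   modulo p, which leaves the chosen residues. *)
From Stdlib Require Import Reals Arith ZArith Lia Lra List Bool.
From Coquelicot Require Import Coquelicot.

Open Scope nat_scope.

Fixpoint window_count (A : Z -> bool) (a : Z) (n : nat) : nat :=
  match n with
  | O => O
  | S n' => (if A a then 1 else 0) + window_count A (a + 1)%Z n'
  end.

Lemma count_sym_window (A : Z -> bool) (N : nat) :
  count_sym A N = window_count A (- Z.of_nat N) (2 * N + 1).
Proof.
  unfold count_sym.
  assert (Hseq : forall s n, length (filter (fun i : nat => A (Z.of_nat i - Z.of_nat N)%Z)
                                            (seq s n))
                             = window_count A (Z.of_nat s - Z.of_nat N) n).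
  { intros s n; revert s; induction n as [|n IH]; intros s; simpl; [reflexivity|].
    replace (Z.of_nat s - Z.of_nat N + 1)%Z with (Z.of_nat (S s) - Z.of_nat N)%Z by lia.
    destruct (A (Z.of_nat s - Z.of_nat N)%Z); simpl; now rewrite IH. }
  now rewrite Hseq.
Qed.

Lemma window_count_add (A : Z -> bool) (a : Z) (n m : nat) :
  window_count A a (n + m) = window_count A a n + window_count A (a + Z.of_nat n) m.
Proof.
  revert a; induction n as [|n IH]; intros a; simpl.
  - now rewrite Z.add_0_r.
  - rewrite IH. replace (a + 1 + Z.of_nat n)%Z with (a + Z.pos (Pos.of_succ_nat n))%Z by lia.
    lia.
Qed.

Lemma window_count_le_length (A : Z -> bool) (a : Z) (n m : nat) :
  n <= m -> window_count A a n <= window_count A a m.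
Proof.
  intros Hnm. replace m with (n + (m - n)) by lia. rewrite window_count_add. lia.
Qed.

Lemma window_count_absent (A : Z -> bool) (a : Z) (n : nat) :
  (forall d, d < n -> A (a + Z.of_nat d)%Z = false) -> window_count A a n = 0.
Proof.
  revert a; induction n as [|n IH]; intros a Habs; simpl; [reflexivity|].
  pose proof (Habs 0 ltac:(lia)) as Ha. rewrite Z.add_0_r in Ha. rewrite Ha.
  apply IH; intros d Hd.
  replace (a + 1 + Z.of_nat d)%Z with (a + Z.of_nat (S d))%Z by lia.
  apply Habs; lia.
Qed.

Lemma window_count_periodic (A : Z -> bool) (p : nat) :
  (forall i, A (i + Z.of_nat p)%Z = A i) ->
  forall a, window_count A a p = window_count A 0 p.
Proof.
  intros Hper.
  assert (Hsucc : forall a, window_count A (a + 1)%Z p = window_count A a p).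
  { intros a.
    pose proof (window_count_add A a 1 p) as E1.
    pose proof (window_count_add A a p 1) as E2.
    rewrite Nat.add_comm, E1 in E2; simpl in E2.
    rewrite Hper in E2. destruct (A a); simpl in E2; lia. }
  intros a; induction a using Z.peano_ind; [reflexivity| |].
  - unfold Z.succ. now rewrite Hsucc.
  - rewrite <- IHa, <- (Hsucc (Z.pred a)). f_equal. lia.
Qed.

Section BlockBounds.

Variables (A : Z -> bool) (p c : nat).

Lemma window_count_blocks_le :
  (forall a, window_count A a p <= c) ->
  forall q a, window_count A a (q * p) <= q * c.
Proof.
  intros Hblock q; induction q as [|q IH]; intros a; simpl; [lia|].
  rewrite window_count_add. specialize (Hblock a). specialize (IH (a + Z.of_nat p)%Z). lia.
Qed.

Lemma window_count_blocks_eq :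
  (forall a, window_count A a p = c) ->
  forall q a, window_count A a (q * p) = q * c.
Proof.
  intros Hblock q; induction q as [|q IH]; intros a; simpl; [lia|].
  rewrite window_count_add, Hblock, IH. lia.
Qed.

Lemma window_count_mul_le (n : nat) (a : Z) :
  0 < p -> (forall a, window_count A a p <= c) -> window_count A a n * p <= c * (n + p).
Proof.
  intros p_pos Hblock.
  pose proof (Nat.div_mod n p ltac:(lia)). pose proof (Nat.mod_upper_bound n p ltac:(lia)).
  assert (window_count A a n <= (n / p + 1) * c).
  { eapply Nat.le_trans; [apply (window_count_le_length A a n ((n / p + 1) * p)); nia|].
    now apply window_count_blocks_le. }
  nia.
Qed.

Lemma window_count_mul_ge (n : nat) (a : Z) :
  0 < p -> (forall a, window_count A a p = c) -> c * n <= window_count A a n * p + c * p.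
Proof.
  intros p_pos Hblock.
  pose proof (Nat.div_mod n p ltac:(lia)). pose proof (Nat.mod_upper_bound n p ltac:(lia)).
  assert (n / p * c <= window_count A a n).
  { rewrite <- (window_count_blocks_eq Hblock (n / p) a). apply window_count_le_length. nia. }
  nia.
Qed.

End BlockBounds.

Open Scope R_scope.

Lemma is_lim_seq_inv_odd : is_lim_seq (fun N => / INR (2 * N + 1)) 0.
Proof.
  replace (Finite 0) with (Rbar_inv p_infty) by reflexivity.
  apply is_lim_seq_inv; [|discriminate].
  apply is_lim_seq_le_p_loc with INR; [|apply is_lim_seq_INR].
  exists 0%nat; intros n _. apply le_INR; lia.
Qed.

Lemma is_lim_seq_plus_inv_odd (v w : R) :
  is_lim_seq (fun N => v + w * / INR (2 * N + 1)) v.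
Proof.
  replace (Finite v) with (Finite (v + w * 0)) by (f_equal; ring).
  apply is_lim_seq_plus'; [apply is_lim_seq_const|].
  apply is_lim_seq_mult'; [apply is_lim_seq_const|apply is_lim_seq_inv_odd].
Qed.

Lemma ratio_le_of_mul_le (x c n p : R) :
  0 < n -> 0 < p -> x * p <= c * (n + p) -> x / n <= c / p + c * / n.
Proof.
  intros Hn Hp H. apply Rmult_le_reg_r with (n * p); [nra|].
  replace (x / n * (n * p)) with (x * p) by (field; lra).
  replace ((c / p + c * / n) * (n * p)) with (c * (n + p)) by (field; lra).
  exact H.
Qed.

Lemma ratio_ge_of_mul_ge (x c n p : R) :
  0 < n -> 0 < p -> c * n <= x * p + c * p -> c / p + - c * / n <= x / n.
Proof.
  intros Hn Hp H. apply Rmult_le_reg_r with (n * p); [nra|].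
  replace (x / n * (n * p)) with (x * p) by (field; lra).
  replace ((c / p + - c * / n) * (n * p)) with (c * n - c * p) by (field; lra).
  lra.
Qed.

Section DensityOfWindows.

Variables (A : Z -> bool) (p c : nat).
Hypothesis p_pos : (0 < p)%nat.

Let odd_pos (N : nat) : 0 < INR (2 * N + 1).
Proof. apply lt_0_INR; lia. Qed.

Let p_pos_R : 0 < INR p.
Proof. apply lt_0_INR; lia. Qed.

Let count_le (N : nat) :
  (forall a, (window_count A a p <= c)%nat) ->
  INR (count_sym A N) / INR (2 * N + 1) <= INR c / INR p + INR c * / INR (2 * N + 1).
Proof.
  intros Hblock. apply ratio_le_of_mul_le; [apply odd_pos|exact p_pos_R|].
  rewrite count_sym_window, <- mult_INR, <- plus_INR, <- mult_INR.
  apply le_INR, window_count_mul_le; assumption.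
Qed.

Lemma density_le_of_windows :
  (forall a, (window_count A a p <= c)%nat) -> Rbar_le (density A) (INR c / INR p).
Proof.
  intros Hblock. unfold density.
  replace (Finite (INR c / INR p))
    with (LimSup_seq (fun N => INR c / INR p + INR c * / INR (2 * N + 1))).
  2:{ apply is_LimSup_seq_unique, is_lim_LimSup_seq, is_lim_seq_plus_inv_odd. }
  apply LimSup_le. exists 0%nat; intros N _. now apply count_le.
Qed.

Lemma density_of_windows :
  (forall a, window_count A a p = c) -> density A = Finite (INR c / INR p).
Proof.
  intros Hblock. unfold density.
  apply is_LimSup_seq_unique, is_lim_LimSup_seq.
  apply is_lim_seq_le_le
    with (fun N => INR c / INR p + - INR c * / INR (2 * N + 1))
         (fun N => INR c / INR p + INR c * / INR (2 * N + 1));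
    [|apply is_lim_seq_plus_inv_odd|apply is_lim_seq_plus_inv_odd].
  intros N; split.
  - apply ratio_ge_of_mul_ge; [apply odd_pos|exact p_pos_R|].
    rewrite count_sym_window, <- !mult_INR, <- plus_INR.
    apply le_INR, window_count_mul_ge; assumption.
  - apply count_le. intros a; rewrite Hblock; lia.
Qed.

End DensityOfWindows.

Lemma indep_ratio_eq_max (S : nat -> Prop) (v : R) :
  (forall A, independent S A -> Rbar_le (density A) v) ->
  (exists A, independent S A /\ density A = Finite v) ->
  indep_ratio S = Finite v.
Proof.
  intros Hub [A [HA HD]]. unfold indep_ratio. apply Rbar_is_lub_unique. split.
  - intros x [B [HB <-]]. now apply Hub.
  - intros b Hb. apply Hb. now exists A.
Qed.

Open Scope nat_scope.

Section IndependentSets.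

Variables (D : nat -> Prop) (A : Z -> bool).

Lemma independent_shift_false :
  independent D A -> forall i d, A i = true -> D d -> A (i + Z.of_nat d)%Z = false.
Proof.
  intros HA i d Hi Hd. destruct (A (i + Z.of_nat d)%Z) eqn:E; [|reflexivity].
  exfalso. apply (HA _ _ E Hi).
  now replace (i + Z.of_nat d - i)%Z with (Z.of_nat d) by ring; rewrite Zabs2Nat.id.
Qed.

Lemma independent_of_shift_false :
  (forall d, D d -> d <> 0) ->
  (forall i d, A i = true -> D d -> A (i + Z.of_nat d)%Z = false) -> independent D A.
Proof.
  intros D_pos Hshift i j Hi Hj HD.
  assert (Hdist : forall x y, (x <= y)%Z -> y = (x + Z.of_nat (Z.abs_nat (i - j)))%Z ->
                  A x = true -> A y = false).
  { intros x y _ -> Hx. now apply Hshift. }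
  destruct (Z_le_gt_dec j i).
  - enough (A i = false) by congruence.
    apply (Hdist j); [lia| rewrite Nat2Z.inj_abs_nat; lia | assumption].
  - enough (A j = false) by congruence.
    apply (Hdist i); [lia| rewrite Nat2Z.inj_abs_nat; lia | assumption].
Qed.

Lemma independent_window_le_1 (n : nat) :
  (forall d, 1 <= d < n -> D d) -> independent D A ->
  forall a, window_count A a n <= 1.
Proof.
  intros Hsmall HA a.
  assert (Hgen : forall m a, m <= n -> window_count A a m <= 1).
  { intros m; induction m as [|m IH]; intros b Hm; simpl; [lia|].
    destruct (A b) eqn:Hb.
    - rewrite window_count_absent; [lia|]. intros d Hd.
      replace (b + 1 + Z.of_nat d)%Z with (b + Z.of_nat (S d))%Z by lia.
      apply (independent_shift_false HA); [assumption|]. apply Hsmall; lia.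
    - apply IH; lia. }
  now apply Hgen.
Qed.

Lemma independent_window_succ_le (k m : nat) :
  D k -> independent D A -> (forall a, window_count A a k <= m) ->
  forall a, window_count A a (k + 1) <= m.
Proof.
  intros Hk HA Hwin a. destruct (A a) eqn:Ha.
  - rewrite window_count_add; simpl.
    rewrite (independent_shift_false HA a k Ha Hk). specialize (Hwin a). lia.
  - rewrite Nat.add_comm, window_count_add; simpl. rewrite Ha.
    specialize (Hwin (a + 1)%Z). lia.
Qed.

End IndependentSets.

Definition spaced_residues (p l : nat) (i : Z) : bool :=
  let r := (i mod Z.of_nat p)%Z in
  ((r mod Z.of_nat l =? 0)%Z && (r + Z.of_nat l <=? Z.of_nat p)%Z).

Lemma mod_eq_of_decomp (a b q r : Z) : (0 <= r < b)%Z -> a = (b * q + r)%Z -> (a mod b = r)%Z.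
Proof. intros Hr E. symmetry. apply Z.mod_unique with q; auto. Qed.

Section SpacedResidues.

Variables (p l : nat).
Hypothesis p_pos : 0 < p.

Lemma spaced_residues_residue (r : Z) : (0 <= r < Z.of_nat p)%Z ->
  spaced_residues p l r = ((r mod Z.of_nat l =? 0)%Z && (r + Z.of_nat l <=? Z.of_nat p)%Z).
Proof. intros Hr. unfold spaced_residues. now rewrite (Z.mod_small r) by exact Hr. Qed.

Lemma spaced_residues_periodic (i : Z) :
  spaced_residues p l (i + Z.of_nat p) = spaced_residues p l i.
Proof.
  unfold spaced_residues.
  replace (i + Z.of_nat p)%Z with (i + 1 * Z.of_nat p)%Z by ring.
  now rewrite Z.mod_add by lia.
Qed.

Lemma window_count_spaced_residues (c : nat) (a : Z) :
  c * l <= p < c * l + l -> window_count (spaced_residues p l) a p = c.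
Proof.
  intros Hp. rewrite window_count_periodic by apply spaced_residues_periodic.
  assert (Hblocks : forall j, j <= c -> window_count (spaced_residues p l) 0 (j * l) = j).
  { induction j as [|j IH]; intros Hj; simpl; [reflexivity|].
    rewrite Nat.add_comm, window_count_add, IH by lia.
    replace l with (S (l - 1)) at 3 by lia; simpl.
    rewrite spaced_residues_residue by nia.
    rewrite (mod_eq_of_decomp _ (Z.of_nat l) (Z.of_nat j) 0) by lia.
    replace ((0 =? 0)%Z && (Z.of_nat (j * l) + Z.of_nat l <=? Z.of_nat p)%Z) with true.
    2:{ symmetry. apply andb_true_iff; split; [apply Z.eqb_eq|apply Z.leb_le]; nia. }
    rewrite window_count_absent; [lia|]. intros d Hd.
    rewrite spaced_residues_residue by nia.
    rewrite (mod_eq_of_decomp _ (Z.of_nat l) (Z.of_nat j) (1 + Z.of_nat d)) by lia.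
    apply andb_false_iff; left; apply Z.eqb_neq; lia. }
  assert (Htail : window_count (spaced_residues p l) (0 + Z.of_nat (c * l)) (p - c * l) = 0).
  { apply window_count_absent. intros d Hd. rewrite spaced_residues_residue by nia.
    apply andb_false_iff; right; apply Z.leb_gt; lia. }
  replace p with (c * l + (p - c * l)) at 2 by lia.
  rewrite window_count_add, Hblocks, Htail; lia.
Qed.

Lemma spaced_residues_shift_small (x : Z) (d : nat) :
  1 <= d <= l - 1 -> spaced_residues p l x = true ->
  spaced_residues p l (x + Z.of_nat d) = false.
Proof.
  intros Hd Hx. unfold spaced_residues in *.
  apply andb_true_iff in Hx as [Hdvd Hle]. apply Z.eqb_eq in Hdvd. apply Z.leb_le in Hle.
  pose proof (Z.mod_pos_bound x (Z.of_nat p) ltac:(lia)).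
  pose proof (Z.div_mod x (Z.of_nat p) ltac:(lia)).
  pose proof (Z.div_mod (x mod Z.of_nat p) (Z.of_nat l) ltac:(lia)).
  set (r := (x mod Z.of_nat p)%Z) in *.
  rewrite (mod_eq_of_decomp _ (Z.of_nat p) (x / Z.of_nat p) (r + Z.of_nat d)) by lia.
  rewrite (mod_eq_of_decomp _ (Z.of_nat l) (r / Z.of_nat l) (Z.of_nat d)) by lia.
  apply andb_false_iff; left; apply Z.eqb_neq; lia.
Qed.

End SpacedResidues.

Lemma spaced_residues_shift_not_dvd (l k : nat) (x : Z) :
  0 < l -> k mod l <> 0 -> spaced_residues l l x = true ->
  spaced_residues l l (x + Z.of_nat k) = false.
Proof.
  intros Hl Hk Hx. unfold spaced_residues in *.
  rewrite Z.mod_mod in * by lia.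
  apply andb_true_iff in Hx as [Hdvd _]. apply Z.eqb_eq in Hdvd.
  pose proof (Z.div_mod x (Z.of_nat l) ltac:(lia)).
  replace (x + Z.of_nat k)%Z with (Z.of_nat k + x / Z.of_nat l * Z.of_nat l)%Z by lia.
  rewrite Z.mod_add by lia. pose proof (Nat2Z.inj_mod k l).
  apply andb_false_iff; left; apply Z.eqb_neq; lia.
Qed.

(* Modulo p = m l + 1 the shift by m l is a shift by -1: it sends the residue 0
   to m l > p - l and every other chosen residue to one congruent to -1 mod l. *)
Lemma spaced_residues_shift_pred (l m : nat) (x : Z) :
  2 <= l -> 1 <= m -> spaced_residues (m * l + 1) l x = true ->
  spaced_residues (m * l + 1) l (x + Z.of_nat (m * l)) = false.
Proof.
  intros Hl Hm Hx. unfold spaced_residues in *.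
  apply andb_true_iff in Hx as [Hdvd Hle].
  apply Z.eqb_eq in Hdvd. apply Z.leb_le in Hle.
  set (L := Z.of_nat l) in *. set (P := Z.of_nat (m * l + 1)) in *.
  assert (HP : P = (Z.of_nat (m * l) + 1)%Z) by (unfold P; lia).
  assert (HK : (L <= Z.of_nat (m * l))%Z) by (unfold L; nia).
  pose proof (Z.mod_pos_bound x P ltac:(lia)). pose proof (Z.div_mod x P ltac:(lia)).
  pose proof (Z.div_mod (x mod P) L ltac:(lia)).
  set (r := (x mod P)%Z) in *.
  destruct (Z.eq_dec r 0) as [Hr|Hr].
  - rewrite (mod_eq_of_decomp _ P (x / P) (Z.of_nat (m * l))) by lia.
    apply andb_false_iff; right; apply Z.leb_gt; lia.
  - rewrite (mod_eq_of_decomp _ P (x / P + 1) (r - 1)) by lia.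
    assert (1 <= r / L)%Z by nia.
    rewrite (mod_eq_of_decomp _ L (r / L - 1) (L - 1)) by lia.
    apply andb_false_iff; left; apply Z.eqb_neq; lia.
Qed.

Definition short_or_k (l k d : nat) : Prop := (1 <= d <= l - 1) \/ d = k.

Section DistanceGraph.

Variables (l k : nat).

Lemma short_or_k_pos (d : nat) : 0 < k -> short_or_k l k d -> d <> 0.
Proof. unfold short_or_k; lia. Qed.

Lemma independent_window_l (A : Z -> bool) :
  independent (short_or_k l k) A -> forall a, window_count A a l <= 1.
Proof.
  apply independent_window_le_1. intros d Hd; left; lia.
Qed.

Lemma spaced_residues_independent (p : nat) :
  0 < p -> 0 < k ->
  (forall x, spaced_residues p l x = true -> spaced_residues p l (x + Z.of_nat k) = false) ->
  independent (short_or_k l k) (spaced_residues p l).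
Proof.
  intros Hp k_pos Hk. apply independent_of_shift_false.
  { intros d; now apply short_or_k_pos. }
  intros x d Hx [Hd| ->]; [now apply spaced_residues_shift_small|now apply Hk].
Qed.

Lemma indep_ratio_short_or_k_not_dvd :
  0 < l -> k mod l <> 0 -> indep_ratio (short_or_k l k) = Finite (1 / INR l).
Proof.
  intros Hl Hk. apply indep_ratio_eq_max.
  - intros A HA. apply (density_le_of_windows A l 1); [lia|].
    now apply independent_window_l.
  - exists (spaced_residues l l). split.
    + assert (k_nz : k <> 0) by (intros ->; now rewrite Nat.Div0.mod_0_l in Hk).
      apply spaced_residues_independent; [lia|lia|].
      intros x; now apply spaced_residues_shift_not_dvd.
    + apply (density_of_windows _ l 1); [lia|].
      intros a; apply window_count_spaced_residues; lia.
Qed.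

Lemma indep_ratio_short_or_k_mul (m : nat) :
  2 <= l -> 1 <= m -> k = m * l -> indep_ratio (short_or_k l k) = Finite (INR m / INR (k + 1)).
Proof.
  intros Hl Hm Hkm.
  apply indep_ratio_eq_max.
  - intros A HA. apply (density_le_of_windows A (k + 1) m); [lia|].
    apply (independent_window_succ_le (short_or_k l k)); [now right|assumption|].
    intros a. rewrite Hkm. replace m with (m * 1) at 2 by lia.
    apply window_count_blocks_le. now apply independent_window_l.
  - exists (spaced_residues (k + 1) l). split.
    + apply spaced_residues_independent; [lia|nia|].
      rewrite Hkm. intros x; now apply spaced_residues_shift_pred.
    + apply (density_of_windows _ (k + 1) m); [lia|].
      intros a; apply window_count_spaced_residues; nia.
Qed.

End DistanceGraph.

Open Scope R_scope.

Theorem theorem22 (l k : nat) (hl : (2 <= l)%nat) (hk : (l < k)%nat) :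
  ((k mod l <> 0)%nat ->
     indep_ratio (fun d => ((1 <= d <= l - 1)%nat \/ d = k)) = Finite (1 / INR l)) /\
  ((k mod l = 0)%nat ->
     indep_ratio (fun d => ((1 <= d <= l - 1)%nat \/ d = k))
       = Finite (INR k / (INR l * INR (k + 1)))).
Proof.
  split; intros Hk.
  - exact (indep_ratio_short_or_k_not_dvd l k ltac:(lia) Hk).
  - set (m := (k / l)%nat).
    assert (Hkm : k = (m * l)%nat).
    { pose proof (Nat.div_mod k l ltac:(lia)). unfold m. lia. }
    assert (Hm : (1 <= m)%nat) by nia.
    change (fun d => ((1 <= d <= l - 1)%nat \/ d = k)) with (short_or_k l k).
    rewrite (indep_ratio_short_or_k_mul l k m hl Hm Hkm).
    f_equal. rewrite Hkm, mult_INR. field. split; apply not_0_INR; lia.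
Qed.
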